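(* In the social learning model with Gaussian signals, for every $\varepsilon>0$ there exists $k>0$ such that for all $t\ge 1$, $$\mathbb{P}(T_1=t)\ge\frac{k}{t^{1+\varepsilon}}.$$
   Context: Social learning model. A state $\theta\in\{-1,+1\}$ is drawn with $\mathbb{P}(\theta=+1)=\mathbb{P}(\theta=-1)=1/2$. Agents $t=1,2,\dots$ receive private signals $s_t\in\mathbb{R}$ that are i.i.d. conditionally on $\theta$, with CDF $F_+$ if $\theta=+1$ and $F_-$ if $\theta=-1$; $F_+$ and $F_-$ are mutually absolutely continuous. Let $L_t=\log\frac{\mathbb{P}(\theta=+1\mid s_t)}{\mathbb{P}(\theta=-1\mid s_t)}$ be the private log-likelihood ratio, and let $G_+$, $G_-$ denote the CDFs of $L_t$ conditional on $\theta=+1$, $\theta=-1$ respectively. Signals are assumed unbounded: for every $M\in\mathbb{R}$, $\mathbb{P}(L_t>M)>0$ and $\mathbb{P}(L_t<-M)>0$. Agent $t$ observes $a_1,\dots,a_{t-1}$ and her own signal and chooses $a_t\in\{-1,+1\}$ (utility $1$ if $a_t=\theta$, else $0$). The public belief is $\mu_t=\mathbb{P}(\theta=+1\mid a_1,\dots,a_{t-1})$ and $\ell_t=\log\frac{\mu_t}{1-\mu_t}$ (so $\ell_1=0$). In equilibrium $a_t=+1$ iff $\ell_t+L_t>0$, and otherwise $a_t=-1$. Consequently $\ell_{t+1}=\ell_t+D_+(\ell_t)$ if $a_t=+1$ and $\ell_{t+1}=\ell_t+D_-(\ell_t)$ if $a_t=-1$, where $D_+(x)=\log\frac{1-G_+(-x)}{1-G_-(-x)}$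 and $D_-(x)=\log\frac{G_+(-x)}{G_-(-x)}$. We write $\mathbb{P}_+(\cdot)=\mathbb{P}(\cdot\mid\theta=+1)$ and $\mathbb{E}_+$ for the corresponding expectation. Gaussian signals: $F_+$ is the normal distribution with mean $+1$ and variance $\sigma^2$, and $F_-$ is the normal distribution with mean $-1$ and variance $\sigma^2$, for some $\sigma>0$. The time of first mistake is $T_1=\min\{t: a_t\ne\theta\}$ if $a_t\neq\theta$ for some $t$, and $T_1=0$ otherwise. *)

From Stdlib Require Import Reals Lra List.
Open Scope R_scope.

Definition gauss (u : R) : R := exp (- (u ^ 2) / 2).

Lemma gauss_integrable (a b : R) : Riemann_integrable gauss a b.
Proof.
  assert (Hc : forall x, continuity_pt gauss x) by (intros; unfold gauss; reg).
  destruct (Rle_dec a b) as [H|H].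
  - apply continuity_implies_RiemannInt; auto.
  - apply RiemannInt_P1, continuity_implies_RiemannInt; auto; lra.
Qed.

Definition Phi (x : R) : R :=
  / 2 + / sqrt (2 * PI) * RiemannInt (gauss_integrable 0 x).

(* Signal CDFs: N(+1, sigma^2) and N(-1, sigma^2). *)
Definition Fplus (sigma s : R) : R := Phi ((s - 1) / sigma).
Definition Fminus (sigma s : R) : R := Phi ((s + 1) / sigma).

(* Private log-likelihood ratio of a signal s (with prior 1/2):
   L(s) = ln (f_+(s) / f_-(s)) = 2 s / sigma^2, strictly increasing in s. *)
Definition llr (sigma s : R) : R :=
  ln (exp (- (s - 1) ^ 2 / (2 * sigma ^ 2)) / exp (- (s + 1) ^ 2 / (2 * sigma ^ 2))).

(* CDFs of L conditional on the state: G_theta(x) = P_theta(2 s/sigma^2 <= x)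
   = F_theta(sigma^2 x / 2). *)
Definition Gplus (sigma x : R) : R := Fplus sigma (sigma ^ 2 * x / 2).
Definition Gminus (sigma x : R) : R := Fminus sigma (sigma ^ 2 * x / 2).

(* States / actions: true = +1, false = -1. *)
Definition Gth (sigma : R) (th : bool) (x : R) : R :=
  if th then Gplus sigma x else Gminus sigma x.

Definition Dplus (sigma x : R) : R :=
  ln ((1 - Gplus sigma (- x)) / (1 - Gminus sigma (- x))).
Definition Dminus (sigma x : R) : R :=
  ln (Gplus sigma (- x) / Gminus sigma (- x)).

(* Public log-likelihood update after action a at public belief l. *)
Definition update (sigma l : R) (a : bool) : R :=
  if a then l + Dplus sigma l else l + Dminus sigma l.

(* Probability, given state th and public belief l, that the agent takes
   action a: a = +1 iff l + L > 0. *)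
Definition pact (sigma : R) (th : bool) (l : R) (a : bool) : R :=
  if a then 1 - Gth sigma th (- l) else Gth sigma th (- l).

Fixpoint hist_prob (sigma : R) (th : bool) (l : R) (h : list bool) : R :=
  match h with
  | nil => 1
  | a :: h' => pact sigma th l a * hist_prob sigma th (update sigma l a) h'
  end.

(* P(T_1 = t) for t >= 1: first t-1 actions correct, action t wrong,
   averaged over the two equally likely states; ell_1 = 0. *)
Definition ProbT1 (sigma : R) (t : nat) : R :=
  / 2 * hist_prob sigma true 0 (repeat true (t - 1) ++ false :: nil)
  + / 2 * hist_prob sigma false 0 (repeat false (t - 1) ++ true :: nil).

(* Along the all-correct history the public
   log-likelihood is deterministic, and the mistake probability at step n is
   Q(y_n), with Q the Gaussian tail and y_n = sigma l_n / 2 + 1 / sigma.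

   Each correct action moves y by at least phi(y) (mean value theorem), so
   exp(y_n^2 / 2) grows at least linearly; by Mills' ratio Q(y_n) = o(1/n),
   hence the probability of t-1 correct actions is at least k t^(-eps/2).
   Conversely a step is at most a constant times Q(y - 2 / sigma), so
   exp(p y_n^2 / 2) grows at most linearly for every p < 1, and Q(y_n) is at
   least k t^(-1-eps/2). *)

From Stdlib Require Import Reals Lra Lia List.
Open Scope R_scope.

(** * The Gaussian integral *)

(* The only input from MathComp-Analysis is [int_0^oo exp (- x^2) = sqrt pi / 2];
   its [pi], [expR] and derivatives are transported to Stdlib's. *)
From mathcomp Require all_boot all_order all_algebra.
From mathcomp Require all_classical all_reals all_analysis.
From mathcomp Require Rstruct Rstruct_topology.

Module GaussIntegral.
Import all_boot all_order all_algebra.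
Import all_classical all_reals all_analysis.
Import Rstruct Rstruct_topology.
Import Order.TTheory GRing.Theory Num.Theory.
Import numFieldNormedType.Exports.
Local Open Scope classical_set_scope.
Local Open Scope ring_scope.

Lemma derivable_pt_limE (f : R^o -> R^o) (x l : R) :
  derivable_pt_lim f x l -> derivable f x 1 /\ derive1 f x = l.
Proof.
move=> H.
have C : (fun h : R^o => h^-1 *: (f (h + x) - f x)) @ 0^' --> (l : R^o).
  apply/cvgrPdist_lt => e e0.
  have /RltP e0' := e0.
  have [d Hd] := H e e0'.
  apply/nbhs_ballP; exists (pos d); first by apply/RltP; apply: cond_pos.
  move=> t Bt tn0.
  have := Hd t (fun E => (negP tn0) (introT eqP E)).
  rewrite /ball /= sub0r normrN in Bt.
  have /RltP Bt' := Bt.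
  move=> /(_ Bt') /RltP.
  by rewrite distrC (addrC t x) -[t^-1 *: _]/(t^-1 * _) mulrC.
have ex : derivable f x 1.
  rewrite /derivable.
  under eq_fun => h do rewrite /= [h%:A]mulr1.
  by apply/cvg_ex; exists (l : R^o).
by split; last exact: cvg_lim.
Qed.

Lemma integral_antiderivative {f F : R -> R} {a b : R} : a < b ->
  continuous (f : R^o -> R^o) ->
  (forall t, derivable_pt_lim F t (f t)) ->
  (\int[lebesgue_measure]_(t in `[a, b]) (f t)%:E = (F b)%:E - (F a)%:E)%E.
Proof.
move=> ab cf HF.
have D t : derivable (F : R^o -> R^o) t 1 /\ derive1 (F : R^o -> R^o) t = f t.
  exact: derivable_pt_limE.
have Fc t : {for t, continuous (F : R^o -> R^o)}.
  by apply: differentiable_continuous; apply/derivable1_diffP; exact: (D t).1.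
apply: continuous_FTC2 => //.
- exact: continuous_subspaceT.
- split.
  + by move=> t _; exact: (D t).1.
  + by apply: cvg_at_right_filter; exact: Fc.
  + by apply: cvg_at_left_filter; exact: Fc.
- by move=> t _; exact: (D t).2.
Qed.

Lemma natr4E : (4%:R : R) = 4%coqR.
Proof. by rewrite -INRE; simpl INR; lra. Qed.

(* Both [pi] and [PI] are 4 atan 1: compare the two FTC computations of
   the integral of 1 / (1 + t^2) over [0, 1]. *)
Lemma piE : pi = PI.
Proof.
have cf : continuous (fun t : R^o => ((1 + t ^+ 2)^-1 : R^o)).
  move=> t; apply: (@continuousV _ _ (fun t : R => 1 + t ^+ 2)).
    by apply: lt0r_neq0; apply: ltr_pwDl => //; exact: sqr_ge0.
  by apply: cvgD; [exact: cvg_cst | exact: exprn_continuous].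
have atanR : forall t, derivable_pt_lim Ratan.atan t (1 + t ^+ 2)^-1.
  move=> t; have := derivable_pt_lim_atan t.
  suff -> : ((/(1 + t^2))%coqR) = (1 + t ^+ 2)^-1 by [].
  by rewrite expr2 /= Rmult_1_r.
have atanC := @continuous_FTC2 R (fun t => (1 + t ^+ 2)^-1) atan 0 1 ltr01
  (continuous_subspaceT cf).
have atanC' : derivable_oo_LRcontinuous (@atan R) 0 1.
  split.
  + by move=> t _; exact: derivable_atan.
  + by apply: cvg_at_right_filter; exact: continuous_atan.
  + by apply: cvg_at_left_filter; exact: continuous_atan.
move: (integral_antiderivative ltr01 cf atanR); rewrite (atanC atanC' (fun t _ => derive1_atan t)).
rewrite atan1 atan0 Ratan.atan_1 Ratan.atan_0 -!EFinB !subr0 => -[].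
rewrite -natr4E => /(congr1 (fun v => v * 4)).
by rewrite /Rdiv -/(PI / 4) !divfK // pnatr_eq0.
Qed.

Lemma antiderivative_gauss_limit (F : R -> R) :
  (forall t, derivable_pt_lim F t (exp (- (t * t)))%coqR) -> F 0 = 0 ->
  forall eps, (0 < eps)%coqR -> exists M, forall x, (M < x)%coqR ->
    (Rabs (F x - sqrt PI / 2) < eps)%coqR.
Proof.
move=> HF F0 eps /RltP e0.
pose G := @gauss_integral_proof.integral0_gauss R.
have FE x : 0 < x -> F x = G x.
  move=> x0; have HF' t : derivable_pt_lim F t (gauss_fun t).
    by rewrite /gauss_fun -RexpE.RexpE expr2.
  have := integral_antiderivative x0 (@continuous_gauss_fun R) HF'.
  rewrite /G /gauss_integral_proof.integral0_gauss /Rintegral => ->.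
  by rewrite F0 /= subr0.
have cvgG : G x @[x --> +oo] --> Num.sqrt pi / 2.
  have : Num.sqrt (G x ^+ 2) @[x --> +oo] --> Num.sqrt (pi / 4).
    apply: continuous_cvg; first exact: sqrt_continuous.
    exact: gauss_integral_proof.cvg_integral0_gauss_sqr.
  rewrite sqrtrM ?pi_ge0// sqrtrV// (_ : 4 = 2 ^+ 2); last by rewrite expr2 -natrM.
  rewrite sqrtr_sqr ger0_norm// (_ : (fun _ => Num.sqrt _) = G)//.
  apply/funext => r; rewrite sqrtr_sqr ger0_norm//.
  exact: gauss_integral_proof.integral0_gauss_ge0.
have /cvgrPdist_lt /(_ eps e0) [M [_ HM]] := cvgG.
exists (Rmax M 0%coqR); move=> x Mx.
have x0 : (0 < x)%coqR by move: (Rmax_r M 0%coqR); lra.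
have /RltP /HM : (M < x)%coqR by move: (Rmax_l M 0%coqR); lra.
by rewrite distrC -FE -?RsqrtE ?piE => [/RltP|]; last exact/RltP.
Qed.

End GaussIntegral.

From Coquelicot Require Import Coquelicot.

Lemma exp_le_exp x y : x <= y -> exp x <= exp y.
Proof. intros [H| ->]; [left; apply exp_increasing|]; lra. Qed.

Lemma exp_le_exp_inv x y : exp x <= exp y -> x <= y.
Proof.
  intros H; destruct (Rle_or_lt x y) as [|Hyx]; auto.
  apply exp_increasing in Hyx; lra.
Qed.

Lemma ln_le_sub1 x : 0 < x -> ln x <= x - 1.
Proof.
  intros Hx; apply exp_le_exp_inv; rewrite exp_ln by exact Hx.
  pose proof (exp_ineq1_le (x - 1)); lra.
Qed.

Lemma ln_ge0 x : 1 <= x -> 0 <= ln x.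
Proof. intros H; rewrite <- ln_1; apply ln_le; lra. Qed.

Lemma exp_opp_mul x : exp (- x) * exp x = 1.
Proof. rewrite <- exp_plus, Rplus_opp_l; apply exp_0. Qed.

Lemma Rpower_le_exponent x y z : 1 <= x -> y <= z -> Rpower x y <= Rpower x z.
Proof.
  intros Hx Hyz; apply exp_le_exp; pose proof (ln_ge0 x Hx).
  apply Rmult_le_compat_r; assumption.
Qed.

Lemma Rpower_ge1 x y : 1 <= x -> 0 <= y -> 1 <= Rpower x y.
Proof. intros Hx Hy; rewrite <- (Rpower_O x) by lra; apply Rpower_le_exponent; lra. Qed.

Lemma Rpower_le1 x y : 1 <= x -> y <= 0 -> Rpower x y <= 1.
Proof. intros Hx Hy; rewrite <- (Rpower_O x) by lra; apply Rpower_le_exponent; lra. Qed.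

Lemma derivable_pt_lim_eq f x l l' :
  derivable_pt_lim f x l -> l = l' -> derivable_pt_lim f x l'.
Proof. now intros H <-. Qed.

(** * The Gaussian tail *)

Lemma continuous_gauss x : continuous gauss x.
Proof.
  apply (continuous_exp_comp (fun u => - u ^ 2 / 2)).
  apply (@ex_derive_continuous R_AbsRing R_NormedModule); auto_derive; auto.
Qed.

Lemma ex_RInt_gauss a b : ex_RInt gauss a b.
Proof.
  apply (@ex_RInt_continuous R_CompleteNormedModule); intros; apply continuous_gauss.
Qed.

Lemma gauss_pos u : 0 < gauss u.
Proof. apply exp_pos. Qed.

Lemma gauss_le1 u : gauss u <= 1.
Proof.
  unfold gauss; rewrite <- exp_0; apply exp_le_exp.
  pose proof (pow2_ge_0 u); lra.
Qed.

Lemma gauss_opp u : gauss (- u) = gauss u.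
Proof. unfold gauss; f_equal; field. Qed.

Definition gauss_area (x : R) : R := RInt gauss 0 x.

Lemma gauss_area_deriv x : derivable_pt_lim gauss_area x (gauss x).
Proof.
  apply is_derive_Reals, (@is_derive_RInt R_NormedModule gauss gauss_area 0 x).
  - apply filter_forall; intros y; apply (@RInt_correct R_CompleteNormedModule), ex_RInt_gauss.
  - apply continuous_gauss.
Qed.

Lemma gauss_area0 : gauss_area 0 = 0.
Proof. exact (@RInt_point R_CompleteNormedModule 0 gauss). Qed.

Lemma gauss_area_opp x : gauss_area (- x) = - gauss_area x.
Proof.
  unfold gauss_area.
  assert (H := RInt_comp_lin gauss (-1) 0 0 x).
  replace (-1 * 0 + 0) with 0 in H by ring.
  replace (-1 * x + 0) with (- x) in H by ring.
  rewrite <- H by apply ex_RInt_gauss.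
  transitivity (RInt (fun y => - gauss y) 0 x).
  - apply RInt_ext; intros y _; unfold scal; simpl; unfold mult; simpl.
    replace (-1 * y + 0) with (- y) by ring; rewrite gauss_opp; ring.
  - exact (@RInt_opp R_CompleteNormedModule gauss 0 x (ex_RInt_gauss 0 x)).
Qed.

Definition inv_sqrt_2pi : R := / sqrt (2 * PI).

Lemma inv_sqrt_2pi_pos : 0 < inv_sqrt_2pi.
Proof. apply Rinv_0_lt_compat, sqrt_lt_R0; pose proof PI_RGT_0; lra. Qed.

Lemma Phi_gauss_area x : Phi x = / 2 + inv_sqrt_2pi * gauss_area x.
Proof. unfold Phi, gauss_area; now rewrite RInt_Reals with (pr := gauss_integrable 0 x). Qed.

Definition vanishes_at_infty (f : R -> R) : Prop :=
  forall eps, 0 < eps -> exists M, forall y, M < y -> Rabs (f y) < eps.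

(* [F x = gauss_area (sqrt 2 * x) / sqrt 2] has derivative [exp (- x^2)], so
   it tends to [sqrt PI / 2] by the Gaussian integral. *)
Lemma gauss_area_vanishing :
  vanishes_at_infty (fun y => / 2 - inv_sqrt_2pi * gauss_area y).
Proof.
  intros eps Heps.
  assert (Hs2 : 0 < sqrt 2) by (apply sqrt_lt_R0; lra).
  assert (Hsp : 0 < sqrt PI) by (apply sqrt_lt_R0, PI_RGT_0).
  set (F x := / sqrt 2 * gauss_area (sqrt 2 * x)).
  assert (HF : forall t, derivable_pt_lim F t (exp (- (t * t)))).
  { intros t; apply is_derive_Reals.
    apply (is_derive_ext (fun x => / sqrt 2 * gauss_area (sqrt 2 * x))); [reflexivity|].
    evar (l : R); replace (exp (- (t * t))) with l.
    - apply @is_derive_scal, (is_derive_comp gauss_area (fun x => sqrt 2 * x)).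
      + apply is_derive_Reals, gauss_area_deriv.
      + auto_derive; [exact I|reflexivity].
    - unfold l, gauss, scal; simpl; unfold mult; simpl.
      replace (sqrt 2 * t * (sqrt 2 * t * 1)) with (sqrt 2 * sqrt 2 * (t * t)) by ring.
      rewrite sqrt_sqrt by lra.
      replace (- (2 * (t * t)) / 2) with (- (t * t)) by field; field; lra. }
  assert (F0 : F 0 = 0) by (unfold F; rewrite Rmult_0_r, gauss_area0; ring).
  destruct (GaussIntegral.antiderivative_gauss_limit F HF F0 (eps * sqrt PI))
    as [M HM]; [nra|].
  exists (sqrt 2 * M); intros y Hy.
  assert (HyM : M < y / sqrt 2) by (apply Rmult_lt_reg_l with (sqrt 2); [lra|]; field_simplify; lra).
  specialize (HM _ HyM).
  replace (/ 2 - inv_sqrt_2pi * gauss_area y) with (- ((F (y / sqrt 2) - sqrt PI / 2) / sqrt PI)).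
  - rewrite Rabs_Ropp; unfold Rdiv; rewrite Rabs_mult, (Rabs_pos_eq (/ sqrt PI))
      by (left; apply Rinv_0_lt_compat; lra).
    apply Rmult_lt_reg_r with (sqrt PI); [lra|].
    rewrite Rmult_assoc, Rinv_l by lra; lra.
  - unfold F, inv_sqrt_2pi; rewrite sqrt_mult by (pose proof PI_RGT_0; lra).
    replace (sqrt 2 * (y / sqrt 2)) with y by (field; lra); field; lra.
Qed.

Definition Q (y : R) : R := Phi (- y).
Definition phi (y : R) : R := inv_sqrt_2pi * gauss y.

Lemma Q_gauss_area y : Q y = / 2 - inv_sqrt_2pi * gauss_area y.
Proof. unfold Q; rewrite Phi_gauss_area, gauss_area_opp; ring. Qed.

Lemma Q0 : Q 0 = / 2.
Proof. rewrite Q_gauss_area, gauss_area0; ring. Qed.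

Lemma Q_opp y : Q (- y) = 1 - Q y.
Proof. rewrite !Q_gauss_area, gauss_area_opp; field. Qed.

Lemma Q_vanishing : vanishes_at_infty Q.
Proof.
  intros eps Heps; destruct (gauss_area_vanishing eps Heps) as [M HM].
  exists M; intros y Hy; rewrite Q_gauss_area; auto.
Qed.

Lemma phi_pos y : 0 < phi y.
Proof. apply Rmult_lt_0_compat; [apply inv_sqrt_2pi_pos | apply gauss_pos]. Qed.

Lemma phi_le y : phi y <= inv_sqrt_2pi.
Proof. pose proof (gauss_le1 y); pose proof inv_sqrt_2pi_pos; unfold phi; nra. Qed.

Lemma phi_le_abs u v : Rabs u <= Rabs v -> phi v <= phi u.
Proof.
  intros H; apply Rmult_le_compat_l; [left; apply inv_sqrt_2pi_pos|].
  apply exp_le_exp; rewrite <- (pow2_abs u), <- (pow2_abs v).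
  pose proof (Rabs_pos u); nra.
Qed.

Lemma phi_deriv t : derivable_pt_lim phi t (- t * phi t).
Proof.
  apply is_derive_Reals; unfold phi, gauss; auto_derive; auto.
  replace (- t ^ 2 / 2) with (- (t * (t * 1)) * / 2) by (unfold Rdiv; ring); field.
Qed.

Lemma Q_deriv y : derivable_pt_lim Q y (- phi y).
Proof.
  apply derivable_pt_lim_eq with (0 - inv_sqrt_2pi * gauss y); [|unfold phi; ring].
  assert (H : derivable_pt_lim (fun y => / 2 - inv_sqrt_2pi * gauss_area y) y
                (0 - inv_sqrt_2pi * gauss y)).
  { apply derivable_pt_lim_minus; [apply derivable_pt_lim_const|].
    apply derivable_pt_lim_scal, gauss_area_deriv. }
  intros e He; destruct (H e He) as [d Hd]; exists d; intros h H1 H2.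
  rewrite !Q_gauss_area; auto.
Qed.

Lemma Q_decreasing y1 y2 : y1 < y2 -> Q y2 < Q y1.
Proof.
  intros H; destruct (MVT_cor2 Q (fun y => - phi y) y1 y2 H) as [c [Hc _]].
  - intros; apply Q_deriv.
  - pose proof (phi_pos c); nra.
Qed.

Lemma Q_le y1 y2 : y1 <= y2 -> Q y2 <= Q y1.
Proof. intros [H| ->]; [left; apply Q_decreasing|]; lra. Qed.

Lemma nonincreasing_vanishing_ge0 (f f' : R -> R) (a : R) :
  (forall t, a < t -> derivable_pt_lim f t (f' t)) ->
  (forall t, a < t -> f' t <= 0) ->
  vanishes_at_infty f ->
  forall y, a < y -> 0 <= f y.
Proof.
  intros Hd Hn Hl y Hy.
  destruct (Rle_or_lt 0 (f y)) as [|Hneg]; auto; exfalso.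
  destruct (Hl (- f y)) as [M HM]; [lra|].
  set (Y := Rmax (y + 1) (M + 1)).
  pose proof (Rmax_l (y + 1) (M + 1)); pose proof (Rmax_r (y + 1) (M + 1)).
  destruct (MVT_cor2 f f' y Y) as [c [Hc Hc2]]; [unfold Y; lra| |].
  { intros; apply Hd; lra. }
  assert (f' c <= 0) by (apply Hn; lra).
  assert (f Y - f y <= 0) by (rewrite Hc; unfold Y in *; nra).
  specialize (HM Y ltac:(unfold Y; lra)).
  apply Rabs_def2 in HM; lra.
Qed.

Lemma vanishes_minus f g :
  vanishes_at_infty f -> vanishes_at_infty g -> vanishes_at_infty (fun y => f y - g y).
Proof.
  intros Hf Hg eps Heps.
  destruct (Hf (eps / 2)) as [M1 H1]; [lra|]; destruct (Hg (eps / 2)) as [M2 H2]; [lra|].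
  exists (Rmax M1 M2); intros y Hy.
  pose proof (Rmax_l M1 M2); pose proof (Rmax_r M1 M2).
  specialize (H1 y ltac:(lra)); specialize (H2 y ltac:(lra)).
  unfold Rminus; eapply Rle_lt_trans; [apply Rabs_triang|]; rewrite Rabs_Ropp; lra.
Qed.

Lemma vanishes_of_inv_bound f C :
  (forall y, 1 <= y -> Rabs (f y) <= C / y) -> vanishes_at_infty f.
Proof.
  intros Hf eps Heps; exists (Rmax 1 (Rabs C / eps)); intros y Hy.
  pose proof (Rmax_l 1 (Rabs C / eps)); pose proof (Rmax_r 1 (Rabs C / eps)).
  eapply Rle_lt_trans; [apply Hf; lra|].
  apply Rle_lt_trans with (Rabs C / y); [apply Rmult_le_compat_r;
    [left; apply Rinv_0_lt_compat; lra | apply RRle_abs]|].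
  apply Rmult_lt_reg_r with y; [lra|]; unfold Rdiv; rewrite Rmult_assoc, Rinv_l by lra.
  apply Rmult_lt_reg_r with (/ eps); [apply Rinv_0_lt_compat; lra|].
  replace (eps * y * / eps) with y by (field; lra); lra.
Qed.

Lemma Q_ge0 y : 0 <= Q y.
Proof.
  apply (nonincreasing_vanishing_ge0 Q (fun y => - phi y) (y - 1)); try lra.
  - intros; apply Q_deriv.
  - intros t _; pose proof (phi_pos t); lra.
  - apply Q_vanishing.
Qed.

Lemma Q_pos y : 0 < Q y.
Proof. pose proof (Q_decreasing y (y + 1)); pose proof (Q_ge0 (y + 1)); lra. Qed.

Lemma Q_lt1 y : Q y < 1.
Proof. pose proof (Q_pos (- y)); rewrite Q_opp in *; lra. Qed.

Lemma Q_le_mills y : 0 < y -> Q y <= phi y / y.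
Proof.
  intros Hy.
  cut (0 <= phi y / y - Q y); [lra|].
  apply (nonincreasing_vanishing_ge0 (fun t => phi t / t - Q t)
           (fun t => - phi t / (t * t)) 0); auto.
  - intros t Ht.
    apply derivable_pt_lim_eq with
      (((- t * phi t) * id t - 1 * phi t) / (id t)² - - phi t).
    + apply (derivable_pt_lim_minus (div_fct phi id)), Q_deriv.
      apply derivable_pt_lim_div; [apply phi_deriv | apply derivable_pt_lim_id |].
      unfold id; lra.
    + unfold id, Rsqr; field; lra.
  - intros t Ht; pose proof (phi_pos t).
    assert (0 < / (t * t)) by (apply Rinv_0_lt_compat; nra); unfold Rdiv; nra.
  - apply vanishes_minus; [|apply Q_vanishing].
    apply (vanishes_of_inv_bound _ inv_sqrt_2pi); intros t Ht.
    pose proof (phi_pos t); pose proof (phi_le t).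
    rewrite Rabs_pos_eq by (apply Rdiv_le_0_compat; lra).
    apply Rmult_le_compat_r; [left; apply Rinv_0_lt_compat|]; lra.
Qed.

Lemma mills_le_Q y : 0 < y -> y * phi y / (1 + y * y) <= Q y.
Proof.
  intros Hy.
  cut (0 <= Q y - y * phi y / (1 + y * y)); [lra|].
  apply (nonincreasing_vanishing_ge0 (fun t => Q t - t * phi t / (1 + t * t))
           (fun t => - 2 * phi t / ((1 + t * t) * (1 + t * t))) 0); auto.
  - intros t Ht; pose proof (Rle_0_sqr t); unfold Rsqr in *.
    apply derivable_pt_lim_eq with
      (- phi t - ((1 * phi t + t * (- t * phi t)) * (1 + t * t) - 2 * t * (t * phi t))
                  / (1 + t * t)²).
    + apply (derivable_pt_lim_minus Q (div_fct (mult_fct id phi) (fun t => 1 + t * t))).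
      * apply Q_deriv.
      * apply (derivable_pt_lim_div (mult_fct id phi) (fun t => 1 + t * t)); [| |lra].
        -- apply (derivable_pt_lim_mult id phi); [apply derivable_pt_lim_id | apply phi_deriv].
        -- apply is_derive_Reals; auto_derive; auto; ring.
    + unfold Rsqr; field; lra.
  - intros t Ht; pose proof (phi_pos t); pose proof (Rle_0_sqr t); unfold Rsqr in *.
    assert (0 < / ((1 + t * t) * (1 + t * t))) by (apply Rinv_0_lt_compat; nra).
    unfold Rdiv; nra.
  - apply vanishes_minus; [apply Q_vanishing|].
    apply (vanishes_of_inv_bound _ inv_sqrt_2pi); intros t Ht.
    pose proof (phi_pos t); pose proof (phi_le t).
    rewrite Rabs_pos_eq by (apply Rdiv_le_0_compat; nra).
    apply Rmult_le_reg_r with (t * (1 + t * t)); [nra|].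
    replace (t * phi t / (1 + t * t) * (t * (1 + t * t))) with (t * t * phi t) by (field; nra).
    replace (inv_sqrt_2pi / t * (t * (1 + t * t))) with (inv_sqrt_2pi * (1 + t * t)) by (field; lra).
    nra.
Qed.

Lemma one_add_sqr_le_exp d y : 0 < d -> 1 + y * y <= (1 + 2 / d) * exp (d * (y * y) / 2).
Proof.
  intros Hd; pose proof (exp_ineq1_le (d * (y * y) / 2)).
  assert (0 < 2 / d) by (apply Rdiv_lt_0_compat; lra).
  assert (0 <= d * (y * y) / 2) by (pose proof (Rle_0_sqr y); unfold Rsqr in *;
    apply Rmult_le_pos; [nra|lra]).
  apply Rle_trans with ((1 + 2 / d) * (1 + d * (y * y) / 2)); [|nra].
  replace ((1 + 2 / d) * (1 + d * (y * y) / 2)) with (1 + d * (y * y) / 2 + 2 / d + y * y)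
    by (field; lra); lra.
Qed.

Lemma Q_ge_exp d : 0 < d -> exists k, 0 < k /\ forall y, 0 <= y ->
  k * exp (- ((1 + d) * (y * y) / 2)) <= Q y.
Proof.
  intros Hd; set (C := 1 + 2 / d).
  assert (HC : 1 <= C) by (unfold C; assert (0 < 2 / d) by (apply Rdiv_lt_0_compat; lra); lra).
  pose proof inv_sqrt_2pi_pos; pose proof (Q_pos 1).
  set (k := Rmin (Q 1) (inv_sqrt_2pi / C)).
  assert (Hk : 0 < k) by (apply Rmin_glb_lt; [|apply Rdiv_lt_0_compat]; lra).
  exists k; split; [exact Hk|]; intros y Hy.
  assert (Hexp : exp (- ((1 + d) * (y * y) / 2)) <= 1).
  { rewrite <- exp_0 at 2; apply exp_le_exp; pose proof (Rle_0_sqr y); unfold Rsqr in *.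
    assert (0 <= (1 + d) * (y * y) / 2) by (apply Rmult_le_pos; [apply Rmult_le_pos|]; lra); lra. }
  pose proof (exp_pos (- ((1 + d) * (y * y) / 2))).
  destruct (Rle_or_lt 1 y) as [Hy1|Hy1].
  - eapply Rle_trans; [|apply mills_le_Q; lra].
    pose proof (one_add_sqr_le_exp d y Hd) as HCy; change (1 + 2 / d) with C in HCy.
    assert (Hsplit : exp (- ((1 + d) * (y * y) / 2)) * exp (d * (y * y) / 2) = gauss y).
    { unfold gauss; rewrite <- exp_plus; f_equal; field. }
    pose proof (exp_pos (d * (y * y) / 2)); pose proof (phi_pos y).
    apply Rle_trans with (inv_sqrt_2pi / C * exp (- ((1 + d) * (y * y) / 2)));
      [apply Rmult_le_compat_r; [lra | apply Rmin_r]|].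
    apply Rmult_le_reg_r with ((1 + y * y) * C); [nra|].
    replace (y * phi y / (1 + y * y) * ((1 + y * y) * C)) with (y * phi y * C) by (field; nra).
    replace (inv_sqrt_2pi / C * exp (- ((1 + d) * (y * y) / 2)) * ((1 + y * y) * C))
      with (inv_sqrt_2pi * exp (- ((1 + d) * (y * y) / 2)) * (1 + y * y)) by (field; lra).
    assert (inv_sqrt_2pi * exp (- ((1 + d) * (y * y) / 2)) * (1 + y * y) <= phi y * C).
    { unfold phi; rewrite <- Hsplit.
      replace (inv_sqrt_2pi * (exp (- ((1 + d) * (y * y) / 2)) * exp (d * (y * y) / 2)) * C)
        with (inv_sqrt_2pi * exp (- ((1 + d) * (y * y) / 2)) * (C * exp (d * (y * y) / 2)))
        by ring.
      apply Rmult_le_compat_l; [|lra]; apply Rmult_le_pos; lra. }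
    assert (0 <= phi y * C) by (apply Rmult_le_pos; lra).
    replace (y * phi y * C) with (y * (phi y * C)) by ring; nra.
  - apply Rle_trans with (Q 1); [|apply Q_le; lra].
    apply Rle_trans with k; [|apply Rmin_l].
    rewrite <- (Rmult_1_r k) at 2; apply Rmult_le_compat_l; lra.
Qed.

(** * Products of complements *)

Lemma one_sub_ge_exp x : 0 <= x <= / 2 -> exp (- (2 * x)) <= 1 - x.
Proof.
  intros Hx; pose proof (exp_ineq1_le (2 * x)); pose proof (exp_opp_mul (2 * x)).
  pose proof (exp_pos (- (2 * x))).
  assert (exp (- (2 * x)) * (1 + 2 * x) <= 1) by nra.
  assert ((1 - x) * (1 + 2 * x) >= 1) by nra.
  nra.
Qed.

Lemma ln_succ_ge x : 0 <= x -> / (2 * (x + 1)) <= ln (x + 2) - ln (x + 1).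
Proof.
  intros Hx.
  assert (L := ln_le_sub1 ((x + 1) / (x + 2)) ltac:(apply Rdiv_lt_0_compat; lra)).
  unfold Rdiv in L; rewrite ln_mult, ln_Rinv in L by (try apply Rinv_0_lt_compat; lra).
  replace ((x + 1) * / (x + 2) - 1) with (- / (x + 2)) in L by (field; lra).
  assert (/ (2 * (x + 1)) <= / (x + 2)) by (apply Rinv_le_contravar; lra).
  lra.
Qed.

Fixpoint prod_compl (g : nat -> R) (m : nat) : R :=
  match m with O => 1 | S m => prod_compl g m * (1 - g m) end.

Lemma prod_compl_ext g h m : (forall i, g i = h i) -> prod_compl g m = prod_compl h m.
Proof. intros E; induction m as [|m IH]; simpl; [|rewrite IH, E]; reflexivity. Qed.

Lemma prod_compl_shift g m :
  prod_compl g (S m) = (1 - g O) * prod_compl (fun j => g (S j)) m.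
Proof. induction m as [|m IH]; simpl in *; [ring|]; rewrite IH; ring. Qed.

Section ProdCompl.
Variable g : nat -> R.
Hypothesis g_bounds : forall m, 0 <= g m <= / 2.

Lemma prod_compl_pos m : 0 < prod_compl g m.
Proof.
  induction m as [|m IH]; simpl; [lra|].
  pose proof (g_bounds m); apply Rmult_lt_0_compat; lra.
Qed.

Lemma prod_compl_le m k : (m <= k)%nat -> prod_compl g k <= prod_compl g m.
Proof.
  induction 1 as [|k _ IH]; simpl; [lra|].
  pose proof (prod_compl_pos k); pose proof (g_bounds k); nra.
Qed.

(* [1 - g m >= exp (- 2 g m)] and [d ln ((m + 2) / (m + 1)) >= d / (2 (m + 1))]. *)
Lemma prod_compl_Rpower_step d m : 0 < d -> g m <= d / (4 * (INR m + 1)) ->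
  prod_compl g m * Rpower (INR m + 1) d <= prod_compl g (S m) * Rpower (INR (S m) + 1) d.
Proof.
  intros Hd Hg; simpl prod_compl; rewrite S_INR.
  pose proof (g_bounds m); pose proof (pos_INR m).
  pose proof (ln_succ_ge (INR m) (pos_INR m)); pose proof (prod_compl_pos m).
  rewrite Rmult_assoc; apply Rmult_le_compat_l; [lra|].
  apply Rle_trans with (exp (- (2 * g m)) * Rpower (INR m + 1 + 1) d).
  - unfold Rpower; rewrite <- exp_plus; apply exp_le_exp.
    replace (INR m + 1 + 1) with (INR m + 2) by ring.
    assert (2 * g m <= d * / (2 * (INR m + 1))).
    { replace (d * / (2 * (INR m + 1))) with (2 * (d / (4 * (INR m + 1)))) by (field; lra).
      lra. }
    assert (d * / (2 * (INR m + 1)) <= d * (ln (INR m + 2) - ln (INR m + 1)))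
      by (apply Rmult_le_compat_l; lra).
    nra.
  - apply Rmult_le_compat_r; [unfold Rpower; left; apply exp_pos|].
    apply one_sub_ge_exp; lra.
Qed.

Lemma prod_compl_ge_Rpower d :
  0 < d -> (exists n0, forall m, (n0 <= m)%nat -> g m <= d / (4 * (INR m + 1))) ->
  exists k, 0 < k /\ forall m, k * Rpower (INR m + 1) (- d) <= prod_compl g m.
Proof.
  intros Hd [n0 Hn0]; exists (prod_compl g n0); split; [apply prod_compl_pos|]; intros m.
  assert (Hm1 : 1 <= INR m + 1) by (pose proof (pos_INR m); lra).
  destruct (Nat.le_gt_cases n0 m) as [Hm|Hm].
  - assert (Hmono : prod_compl g n0 <= prod_compl g m * Rpower (INR m + 1) d).
    { induction Hm as [|m Hm IH].
      - pose proof (prod_compl_pos n0); pose proof (Rpower_ge1 (INR n0 + 1) d Hm1 ltac:(lra)).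
        nra.
      - pose proof (prod_compl_Rpower_step d m Hd (Hn0 m Hm)).
        specialize (IH ltac:(pose proof (pos_INR m); lra)); lra. }
    replace (prod_compl g m) with (prod_compl g m * Rpower (INR m + 1) d * Rpower (INR m + 1) (- d))
      by (rewrite Rmult_assoc, <- Rpower_plus, Rplus_opp_r, Rpower_O by lra; ring).
    apply Rmult_le_compat_r; [unfold Rpower; left; apply exp_pos | exact Hmono].
  - pose proof (prod_compl_le m n0 ltac:(lia)); pose proof (prod_compl_pos n0).
    pose proof (Rpower_le1 (INR m + 1) (- d) Hm1 ltac:(lra)).
    assert (0 < Rpower (INR m + 1) (- d)) by apply exp_pos.
    nra.
Qed.

End ProdCompl.

(** * Public belief along correct actions *)

Definition gauss_pot (p y : R) : R := exp (p * (y * y) / 2).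

Lemma gauss_pot_pos p y : 0 < gauss_pot p y.
Proof. apply exp_pos. Qed.

Lemma gauss_pot_le p y1 y2 : 0 <= p -> 0 <= y1 <= y2 -> gauss_pot p y1 <= gauss_pot p y2.
Proof. intros Hp Hy; apply exp_le_exp; assert (y1 * y1 <= y2 * y2) by nra; unfold Rdiv; nra. Qed.

Lemma gauss_pot_le_inv p y1 y2 : 0 < p -> 0 <= y2 ->
  gauss_pot p y1 <= gauss_pot p y2 -> y1 <= y2.
Proof.
  intros Hp Hy2 H; apply exp_le_exp_inv in H.
  destruct (Rle_or_lt y1 y2) as [|Hlt]; auto.
  assert (y2 * y2 < y1 * y1) by nra.
  assert (p * (y2 * y2) < p * (y1 * y1)) by (apply Rmult_lt_compat_l; lra); lra.
Qed.

Lemma phi_gauss_pot y : phi y * gauss_pot 1 y = inv_sqrt_2pi.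
Proof.
  unfold phi, gauss, gauss_pot; rewrite Rmult_assoc, <- exp_plus.
  replace (- y ^ 2 / 2 + 1 * (y * y) / 2) with 0 by field; rewrite exp_0; ring.
Qed.

Lemma exp_sub1_le z : exp z - 1 <= z * exp z.
Proof.
  pose proof (exp_ineq1_le (- z)); pose proof (exp_pos z); pose proof (exp_opp_mul z); nra.
Qed.

Lemma gauss_pot_incr p y D M : 0 <= p <= 1 -> 0 <= y -> 0 <= D <= M ->
  gauss_pot p (y + D) - gauss_pot p y <= D * (y + M) * gauss_pot p (y + M).
Proof.
  intros Hp Hy HD.
  set (z := p * (y * D + D * D / 2)).
  assert (E : gauss_pot p (y + D) = gauss_pot p y * exp z).
  { unfold gauss_pot, z; rewrite <- exp_plus; f_equal; field. }
  assert (S0 : 0 <= y * D + D * D / 2) by (assert (0 <= D * D) by nra; nra).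
  assert (S1 : y * D + D * D / 2 <= D * (y + M)) by nra.
  assert (Hz0 : 0 <= z) by (unfold z; nra).
  assert (Hz : z <= D * (y + M)) by (unfold z; nra).
  pose proof (exp_sub1_le z); pose proof (gauss_pot_pos p y); pose proof (gauss_pot_pos p (y + D)).
  assert (gauss_pot p (y + D) <= gauss_pot p (y + M)) by (apply gauss_pot_le; lra).
  assert (gauss_pot p (y + D) - gauss_pot p y <= z * gauss_pot p (y + D)) by (rewrite E; nra).
  assert (0 <= D * (y + M)) by nra.
  nra.
Qed.

Lemma quadratic_le_max al be ga y : 0 < al ->
  - al * y * y + be * y + ga <= ga + be * be / (4 * al).
Proof.
  intros H.
  assert (0 <= (2 * al * y - be) * (2 * al * y - be) / (4 * al)).
  { apply Rmult_le_pos; [apply Rle_0_sqr | left; apply Rinv_0_lt_compat; lra]. }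
  replace (ga + be * be / (4 * al)) with
    (- al * y * y + be * y + ga + (2 * al * y - be) * (2 * al * y - be) / (4 * al))
    by (field; lra).
  lra.
Qed.

(* Bounding [Q] by [phi] and [y + M] by [exp (y + M)], the exponent is a
   concave quadratic in [y] since [p < 1]. *)
Lemma Q_mul_gauss_pot_bounded p u M : 0 <= p < 1 -> 0 <= u -> 0 <= M ->
  exists C, 0 <= C /\ forall y, u + 1 <= y ->
    Q (y - u) * (y + M) * gauss_pot p (y + M) <= C.
Proof.
  intros Hp Hu HM.
  set (al := (1 - p) / 2); set (be := u + 1 + p * M).
  set (ga := - (u * u) / 2 + M + p * M * M / 2).
  exists (inv_sqrt_2pi * exp (ga + be * be / (4 * al))); split.
  { pose proof inv_sqrt_2pi_pos; pose proof (exp_pos (ga + be * be / (4 * al))); nra. }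
  intros y Hy.
  assert (HQ : Q (y - u) <= phi (y - u)).
  { pose proof (Q_le_mills (y - u) ltac:(lra)); pose proof (phi_pos (y - u)).
    apply Rle_trans with (phi (y - u) / (y - u)); [assumption|].
    apply Rmult_le_reg_r with (y - u); [lra|].
    unfold Rdiv; rewrite Rmult_assoc, Rinv_l by lra; nra. }
  assert (Hlin : y + M <= exp (y + M)) by (pose proof (exp_ineq1_le (y + M)); lra).
  pose proof (Q_pos (y - u)); pose proof (gauss_pot_pos p (y + M)); pose proof inv_sqrt_2pi_pos.
  apply Rle_trans with (phi (y - u) * exp (y + M) * gauss_pot p (y + M)).
  { apply Rmult_le_compat_r; [lra|]; apply Rmult_le_compat; lra. }
  unfold phi, gauss, gauss_pot; rewrite !Rmult_assoc, <- !exp_plus.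
  apply Rmult_le_compat_l; [lra|]; apply exp_le_exp.
  replace (- (y - u) ^ 2 / 2 + (y + M + p * ((y + M) * (y + M)) / 2))
    with (- al * y * y + be * y + ga) by (unfold al, be, ga; field).
  apply quadratic_le_max; unfold al; lra.
Qed.

Section Belief.
Variables a b : R.
Hypothesis a_pos : 0 < a.
Hypothesis b_pos : 0 < b.
Hypothesis ab_half : a * b = / 2.

(* For [a = sigma / 2] and [b = 1 / sigma], [qplus l = G_+(-l)] and
   [qminus l = G_-(-l)] are the probabilities of the action -1 at public
   log-likelihood [l] in the states +1 and -1, [Dup] is [D_+], and
   [belief n] is the public log-likelihood after [n] actions +1. *)
Definition qplus (l : R) : R := Q (a * l + b).
Definition qminus (l : R) : R := Q (a * l - b).
Definition Dup (l : R) : R := ln ((1 - qplus l) / (1 - qminus l)).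

Fixpoint belief (n : nat) : R :=
  match n with O => 0 | S n => belief n + Dup (belief n) end.

Definition tail_arg (n : nat) : R := a * belief n + b.

Lemma qplus_le_qminus l : qplus l <= qminus l.
Proof. apply Q_le; lra. Qed.

Lemma Dup_ge_sub l : qminus l - qplus l <= Dup l.
Proof.
  unfold Dup; pose proof (qplus_le_qminus l).
  pose proof (Q_pos (a * l + b)); pose proof (Q_lt1 (a * l + b)); pose proof (Q_lt1 (a * l - b)).
  unfold qplus, qminus in *; set (g := Q (a * l + b)) in *; set (h := Q (a * l - b)) in *.
  replace ((1 - g) / (1 - h)) with (/ ((1 - h) / (1 - g))) by (field; lra).
  rewrite ln_Rinv by (apply Rdiv_lt_0_compat; lra).
  assert (L := ln_le_sub1 ((1 - h) / (1 - g)) ltac:(apply Rdiv_lt_0_compat; lra)).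
  replace ((1 - h) / (1 - g) - 1) with (- ((h - g) / (1 - g))) in L by (field; lra).
  assert (h - g <= (h - g) / (1 - g)).
  { apply Rmult_le_reg_r with (1 - g); [lra|].
    unfold Rdiv; rewrite Rmult_assoc, Rinv_l by lra; nra. }
  lra.
Qed.

Lemma Dup_ge0 l : 0 <= Dup l.
Proof. pose proof (Dup_ge_sub l); pose proof (qplus_le_qminus l); lra. Qed.

Lemma Dup_le l : 0 <= l -> Dup l <= qminus l / Q b.
Proof.
  intros Hl; unfold Dup; pose proof (qplus_le_qminus l).
  pose proof (Q_pos (a * l + b)); pose proof (Q_lt1 (a * l - b)); pose proof (Q_pos b).
  unfold qplus, qminus in *; set (g := Q (a * l + b)) in *; set (h := Q (a * l - b)) in *.
  assert (h <= 1 - Q b) by (unfold h; rewrite <- Q_opp; apply Q_le; nra).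
  assert (L := ln_le_sub1 ((1 - g) / (1 - h)) ltac:(apply Rdiv_lt_0_compat; lra)).
  replace ((1 - g) / (1 - h) - 1) with ((h - g) / (1 - h)) in L by (field; lra).
  assert ((h - g) / (1 - h) <= h / Q b).
  { apply Rmult_le_reg_r with ((1 - h) * Q b); [nra|].
    replace ((h - g) / (1 - h) * ((1 - h) * Q b)) with ((h - g) * Q b) by (field; lra).
    replace (h / Q b * ((1 - h) * Q b)) with (h * (1 - h)) by (field; lra); nra. }
  lra.
Qed.

Lemma belief_ge0 n : 0 <= belief n.
Proof. induction n; simpl; [lra|]; pose proof (Dup_ge0 (belief n)); lra. Qed.

Lemma tail_arg_ge n : b <= tail_arg n.
Proof. unfold tail_arg; pose proof (belief_ge0 n); nra. Qed.

Lemma tail_arg_S n : tail_arg (S n) = tail_arg n + a * Dup (belief n).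
Proof. unfold tail_arg; simpl; ring. Qed.

Lemma qplus_belief n : qplus (belief n) = Q (tail_arg n).
Proof. reflexivity. Qed.

Lemma qplus_belief_bounds n : 0 <= qplus (belief n) <= / 2.
Proof.
  rewrite qplus_belief, <- Q0; split; [apply Q_ge0|apply Q_le].
  pose proof (tail_arg_ge n); lra.
Qed.

(* [Dup >= Q (y - 2 b) - Q y >= 2 b phi y] by the mean value theorem, and [2 a b = 1]. *)
Lemma phi_le_step n : phi (tail_arg n) <= a * Dup (belief n).
Proof.
  pose proof (tail_arg_ge n); pose proof (Dup_ge_sub (belief n)).
  unfold qplus, qminus in *; fold (tail_arg n) in *; set (y := tail_arg n) in *.
  replace (a * belief n - b) with (y - 2 * b) in * by (unfold y, tail_arg; ring).
  destruct (MVT_cor2 Q (fun y => - phi y) (y - 2 * b) y) as [c [Hc Hc2]]; [lra| |].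
  { intros; apply Q_deriv. }
  assert (phi y <= phi c).
  { apply phi_le_abs; rewrite (Rabs_pos_eq y) by lra.
    apply Rabs_le; lra. }
  assert (Q (y - 2 * b) - Q y = phi c * (2 * b)) by lra.
  assert (a * (phi c * (2 * b)) = phi c).
  { replace (a * (phi c * (2 * b))) with (phi c * (2 * (a * b))) by ring.
    rewrite ab_half; field. }
  nra.
Qed.

(* Since [phi y * exp (y^2 / 2)] is constant, [phi_le_step] makes
   [exp (tail_arg n ^ 2 / 2)] grow at least linearly. *)
Lemma gauss_pot_step_ge n :
  gauss_pot 1 (tail_arg n) + b * inv_sqrt_2pi <= gauss_pot 1 (tail_arg (S n)).
Proof.
  rewrite tail_arg_S; set (y := tail_arg n); set (D := a * Dup (belief n)).
  pose proof (tail_arg_ge n) as Hy; fold y in Hy.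
  pose proof (phi_le_step n) as HD; fold y D in HD.
  pose proof (phi_pos y); pose proof inv_sqrt_2pi_pos; pose proof (phi_gauss_pot y).
  pose proof (gauss_pot_pos 1 y).
  assert (E : gauss_pot 1 (y + D) = gauss_pot 1 y * exp (y * D + D * D / 2)).
  { unfold gauss_pot; rewrite <- exp_plus; f_equal; field. }
  rewrite E; pose proof (exp_ineq1_le (y * D + D * D / 2)).
  assert (inv_sqrt_2pi <= gauss_pot 1 y * D) by nra.
  assert (b * inv_sqrt_2pi <= gauss_pot 1 y * (y * D)) by nra.
  assert (0 <= D * D / 2) by (assert (0 <= D * D) by nra; lra).
  nra.
Qed.

Lemma gauss_pot_ge n : INR n * (b * inv_sqrt_2pi) <= gauss_pot 1 (tail_arg n).
Proof.
  induction n as [|n IH].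
  - pose proof (gauss_pot_pos 1 (tail_arg 0)); simpl; lra.
  - rewrite S_INR; pose proof (gauss_pot_step_ge n); lra.
Qed.

(* Mills' upper bound [Q y <= phi y / y] with [phi y = c / gauss_pot 1 y]. *)
Lemma qplus_belief_le d : 0 < d ->
  exists n0, forall n, (n0 <= n)%nat -> qplus (belief n) <= d / (4 * (INR n + 1)).
Proof.
  intros Hd; set (Y := 8 / (b * d)).
  assert (HY : 0 < Y) by (unfold Y; apply Rdiv_lt_0_compat; nra).
  pose proof inv_sqrt_2pi_pos as Hc.
  destruct (INR_unbounded (Rmax 1 (gauss_pot 1 Y / (b * inv_sqrt_2pi)))) as [n0 Hn0].
  pose proof (Rmax_l 1 (gauss_pot 1 Y / (b * inv_sqrt_2pi))).
  pose proof (Rmax_r 1 (gauss_pot 1 Y / (b * inv_sqrt_2pi))).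
  exists n0; intros n Hn.
  pose proof (le_INR _ _ Hn); assert (Hn1 : 1 <= INR n) by lra.
  pose proof (gauss_pot_ge n); pose proof (tail_arg_ge n).
  rewrite qplus_belief; set (y := tail_arg n) in *.
  assert (HYy : Y <= y).
  { apply (gauss_pot_le_inv 1); [lra|lra|].
    apply Rle_trans with (INR n * (b * inv_sqrt_2pi)); [|assumption].
    replace (gauss_pot 1 Y) with (gauss_pot 1 Y / (b * inv_sqrt_2pi) * (b * inv_sqrt_2pi))
      by (field; nra).
    apply Rmult_le_compat_r; [nra|lra]. }
  eapply Rle_trans; [apply Q_le_mills; lra|].
  pose proof (phi_gauss_pot y); pose proof (gauss_pot_pos 1 y).
  replace (phi y / y) with (inv_sqrt_2pi / (gauss_pot 1 y * y))
    by (rewrite <- (phi_gauss_pot y); field; lra).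
  apply Rle_trans with (inv_sqrt_2pi / (INR n * (b * inv_sqrt_2pi) * Y)).
  { assert (0 < INR n * (b * inv_sqrt_2pi))
      by (apply Rmult_lt_0_compat; [|apply Rmult_lt_0_compat]; lra).
    apply Rmult_le_compat_l; [lra|]; apply Rinv_le_contravar;
      [apply Rmult_lt_0_compat | apply Rmult_le_compat]; lra. }
  replace (inv_sqrt_2pi / (INR n * (b * inv_sqrt_2pi) * Y)) with (d / (8 * INR n))
    by (unfold Y; field; nra).
  apply Rmult_le_compat_l; [lra|]; apply Rinv_le_contravar; nra.
Qed.

Section UpperGrowth.
Variable d : R.
Hypothesis d_pos : 0 < d.

Let p := / (1 + d).

Lemma p_bounds : 0 < p < 1.
Proof.
  unfold p; split; [apply Rinv_0_lt_compat; lra|].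
  rewrite <- Rinv_1; apply Rinv_lt_contravar; lra.
Qed.

Lemma step_bounds n : 0 <= a * Dup (belief n) <= a / Q b /\
  a * Dup (belief n) <= a / Q b * qminus (belief n).
Proof.
  pose proof (Dup_ge0 (belief n)); pose proof (Dup_le _ (belief_ge0 n)).
  pose proof (Q_pos b); pose proof (Q_lt1 (a * belief n - b)); pose proof (Q_pos (a * belief n - b)).
  unfold qminus in *.
  replace (a / Q b * Q (a * belief n - b)) with (a * (Q (a * belief n - b) / Q b)) by (field; lra).
  assert (Q (a * belief n - b) / Q b <= / Q b).
  { unfold Rdiv; assert (0 < / Q b) by (apply Rinv_0_lt_compat; lra); nra. }
  unfold Rdiv in *; split; [split|]; nra.
Qed.

Lemma gauss_pot_step_le : exists K, 0 <= K /\
  forall n, gauss_pot p (tail_arg (S n)) <= gauss_pot p (tail_arg n) + K.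
Proof.
  set (M := a / Q b).
  assert (HM : 0 < M) by (apply Rdiv_lt_0_compat; [lra|apply Q_pos]).
  pose proof p_bounds.
  destruct (Q_mul_gauss_pot_bounded p (2 * b) M) as [C [HC HCy]]; try lra.
  exists (M * C + gauss_pot p (2 * b + 1 + M)); split.
  { pose proof (gauss_pot_pos p (2 * b + 1 + M)); nra. }
  intros n; rewrite tail_arg_S.
  destruct (step_bounds n) as [HD HDq]; fold M in HD, HDq.
  pose proof (tail_arg_ge n).
  set (D := a * Dup (belief n)) in *; set (y := tail_arg n) in *.
  pose proof (gauss_pot_pos p y); pose proof (gauss_pot_pos p (2 * b + 1 + M)).
  assert (0 <= M * C) by nra.
  destruct (Rle_or_lt (2 * b + 1) y) as [Hy|Hy].
  - pose proof (gauss_pot_incr p y D M ltac:(lra) ltac:(lra) HD).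
    assert (Hq : qminus (belief n) = Q (y - 2 * b)) by (unfold qminus, y, tail_arg; f_equal; ring).
    pose proof (HCy y Hy); pose proof (gauss_pot_pos p (y + M)).
    assert (D * (y + M) * gauss_pot p (y + M) <= M * (Q (y - 2 * b) * (y + M) * gauss_pot p (y + M))).
    { rewrite <- Hq; replace (M * (qminus (belief n) * (y + M) * gauss_pot p (y + M)))
        with (M * qminus (belief n) * ((y + M) * gauss_pot p (y + M))) by ring.
      rewrite Rmult_assoc; apply Rmult_le_compat_r; [nra|lra]. }
    nra.
  - assert (gauss_pot p (y + D) <= gauss_pot p (2 * b + 1 + M)) by (apply gauss_pot_le; lra).
    lra.
Qed.

Lemma qplus_belief_ge : exists k, 0 < k /\
  forall n, k * Rpower (INR n + 1) (- ((1 + d) * (1 + d))) <= qplus (belief n).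
Proof.
  destruct gauss_pot_step_le as [K [HK HKn]].
  destruct (Q_ge_exp d d_pos) as [k [Hk Hky]].
  set (K' := gauss_pot p (tail_arg 0) + K).
  assert (HK' : 0 < K') by (pose proof (gauss_pot_pos p (tail_arg 0)); unfold K'; lra).
  exists (k * exp (- ((1 + d) * (1 + d) * ln K'))); split.
  { apply Rmult_lt_0_compat; [lra|apply exp_pos]. }
  intros n; pose proof (pos_INR n).
  assert (Hpot : gauss_pot p (tail_arg n) <= K' * (INR n + 1)).
  { assert (gauss_pot p (tail_arg n) <= gauss_pot p (tail_arg 0) + INR n * K).
    { induction n as [|n IH]; [simpl; lra|].
      rewrite S_INR; pose proof (HKn n); pose proof (pos_INR n); specialize (IH ltac:(lra)); lra. }
    pose proof (gauss_pot_pos p (tail_arg 0)); unfold K'; nra. }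
  assert (Hln : p * (tail_arg n * tail_arg n) / 2 <= ln K' + ln (INR n + 1)).
  { rewrite <- ln_mult by lra; rewrite <- (ln_exp (p * (tail_arg n * tail_arg n) / 2)).
    apply ln_le; [apply exp_pos|exact Hpot]. }
  pose proof (tail_arg_ge n).
  rewrite qplus_belief; eapply Rle_trans; [|apply Hky; lra].
  unfold Rpower; rewrite Rmult_assoc, <- exp_plus.
  apply Rmult_le_compat_l; [lra|]; apply exp_le_exp.
  replace ((1 + d) * (tail_arg n * tail_arg n) / 2)
    with ((1 + d) * (1 + d) * (p * (tail_arg n * tail_arg n) / 2)) by (unfold p; field; lra).
  assert (0 <= (1 + d) * (1 + d)) by nra.
  assert ((1 + d) * (1 + d) * (p * (tail_arg n * tail_arg n) / 2)
          <= (1 + d) * (1 + d) * (ln K' + ln (INR n + 1))) by (apply Rmult_le_compat_l; lra).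
  lra.
Qed.

End UpperGrowth.

(* The product controls the first [n] correct actions ([prod_compl_ge_Rpower]
   with exponent [eps / 2]) and [qplus] the mistake at time [n + 1]
   ([qplus_belief_ge] with [(1 + d)^2 <= 1 + eps / 2]). *)
Lemma first_mistake_ge eps : 0 < eps -> exists k, 0 < k /\ forall n,
  k * Rpower (INR n + 1) (- (1 + eps)) <= prod_compl (fun j => qplus (belief j)) n * qplus (belief n).
Proof.
  intros Heps; set (d := Rmin 1 (eps / 6)).
  assert (Hd : 0 < d) by (apply Rmin_glb_lt; lra).
  assert (Hd2 : (1 + d) * (1 + d) <= 1 + eps / 2).
  { pose proof (Rmin_l 1 (eps / 6)) as H1; pose proof (Rmin_r 1 (eps / 6)) as H2.
    change (Rmin 1 (eps / 6)) with d in H1, H2; nra. }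
  destruct (prod_compl_ge_Rpower (fun j => qplus (belief j)) qplus_belief_bounds (eps / 2))
    as [k1 [Hk1 Hprod]]; [lra | apply qplus_belief_le; lra |].
  destruct (qplus_belief_ge d Hd) as [k2 [Hk2 Hq]].
  exists (k1 * k2); split; [nra|]; intros n.
  assert (Hn1 : 1 <= INR n + 1) by (pose proof (pos_INR n); lra).
  pose proof (Hprod n); pose proof (Hq n).
  assert (Rpower (INR n + 1) (- (1 + eps))
          <= Rpower (INR n + 1) (- (eps / 2)) * Rpower (INR n + 1) (- ((1 + d) * (1 + d)))).
  { rewrite <- Rpower_plus; apply Rpower_le_exponent; lra. }
  assert (0 < Rpower (INR n + 1) (- (1 + eps))) by apply exp_pos.
  apply Rle_trans with (k1 * Rpower (INR n + 1) (- (eps / 2))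
                        * (k2 * Rpower (INR n + 1) (- ((1 + d) * (1 + d))))).
  - replace (k1 * Rpower (INR n + 1) (- (eps / 2)) * (k2 * Rpower (INR n + 1) (- ((1 + d) * (1 + d)))))
      with (k1 * k2 * (Rpower (INR n + 1) (- (eps / 2)) * Rpower (INR n + 1) (- ((1 + d) * (1 + d)))))
      by ring.
    apply Rmult_le_compat_l; nra.
  - apply Rmult_le_compat; try assumption; apply Rmult_le_pos; try lra; left; apply exp_pos.
Qed.

End Belief.

(** * Gaussian signals *)

Lemma Phi_bounds x : 0 <= Phi x <= 1.
Proof.
  replace (Phi x) with (Q (- x)) by (unfold Q; now rewrite Ropp_involutive).
  pose proof (Q_pos (- x)); pose proof (Q_lt1 (- x)); lra.
Qed.

Lemma hist_prob_ge0 sigma th l h : 0 <= hist_prob sigma th l h.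
Proof.
  revert l; induction h as [|x h IH]; intros l; simpl; [lra|].
  apply Rmult_le_pos; auto.
  unfold pact, Gth, Gplus, Gminus, Fplus, Fminus.
  destruct x, th; try apply Phi_bounds;
    match goal with |- 0 <= 1 - Phi ?z => pose proof (Phi_bounds z); lra end.
Qed.

Section GaussianSignals.
Variable sigma : R.
Hypothesis sigma_pos : 0 < sigma.

Let a := sigma / 2.
Let b := / sigma.

Lemma Gplus_qplus l : Gplus sigma (- l) = qplus a b l.
Proof. unfold Gplus, Fplus, qplus, Q; f_equal; unfold a, b; field; lra. Qed.

Lemma Gminus_qminus l : Gminus sigma (- l) = qminus a b l.
Proof. unfold Gminus, Fminus, qminus, Q; f_equal; unfold a, b; field; lra. Qed.

Lemma update_belief j : update sigma (belief a b j) true = belief a b (S j).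
Proof. simpl; unfold Dplus, Dup; now rewrite Gplus_qplus, Gminus_qminus. Qed.

Lemma hist_prob_first_mistake m j :
  hist_prob sigma true (belief a b j) (repeat true m ++ false :: nil)
  = prod_compl (fun i => qplus a b (belief a b (j + i))) m * qplus a b (belief a b (j + m)).
Proof.
  revert j; induction m as [|m IH]; intros j.
  - simpl; unfold Gth; rewrite Gplus_qplus, Nat.add_0_r; ring.
  - cbn [repeat app hist_prob pact Gth].
    rewrite update_belief, IH, Gplus_qplus, prod_compl_shift, Nat.add_succ_r.
    rewrite (prod_compl_ext (fun i => qplus a b (belief a b (S j + i)))
               (fun i => qplus a b (belief a b (j + S i)))) by (intros i; now rewrite Nat.add_succ_r).
    rewrite Nat.add_0_r; change (S j + m)%nat with (S (j + m)); ring.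
Qed.

End GaussianSignals.

Theorem theorem5 (sigma : R) (Hsigma : 0 < sigma) :
  forall eps : R, 0 < eps ->
  exists k : R, 0 < k /\
    forall t : nat, (1 <= t)%nat ->
      ProbT1 sigma t >= k / Rpower (INR t) (1 + eps).
Proof.
  intros eps Heps.
  assert (Ha : 0 < sigma / 2) by lra.
  assert (Hb : 0 < / sigma) by (apply Rinv_0_lt_compat; lra).
  assert (Hab : sigma / 2 * / sigma = / 2) by (field; lra).
  destruct (first_mistake_ge _ _ Ha Hb Hab eps Heps) as [k [Hk Hn]].
  exists (k / 2); split; [lra|]; intros t Ht.
  destruct t as [|n]; [lia|].
  unfold ProbT1; replace (S n - 1)%nat with n by lia.
  pose proof (hist_prob_ge0 sigma false 0 (repeat false n ++ true :: nil)).
  pose proof (hist_prob_first_mistake sigma Hsigma n 0) as E; cbn [belief Nat.add] in E.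
  rewrite E, S_INR; specialize (Hn n); rewrite Rpower_Ropp in Hn.
  unfold Rdiv in *; lra.
Qed.
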